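(* The order-preserving map $\psi:T_K(V)\to T_{O_K}(\Lambda)$, $W\mapsto W\cap\Lambda$, induces a homotopy equivalence of the order complexes (geometric realizations) $T_K(V)^\bullet\simeq T_{O_K}(\Lambda)^\bullet$.
   Context: $K$ finite over $\mathbb Q_p$, $O_K$ its integers, $\pi$ a uniformizer, $V=K^{d+1}$, $\Lambda=\bigoplus_{i=0}^dO_Ke_i$. $T_K(V)$ is the poset (under inclusion) of $K$-subspaces $0\neq W\subsetneq V$ (the Tits building of $\mathrm{GL}(V)$). $T_{O_K}(\Lambda)$ is the poset (under inclusion) of $O_K$-submodules $U\subset\Lambda$ with $U\not\subset\pi\Lambda$ (i.e. $\dim_{O_K/\pi}(U+\pi\Lambda)/\pi\Lambda\ge1$) which can be generated by at most $d$ elements. For a poset $X$, the order complex $X^\bullet$ has as $n$-simplices chains $x_0\prec\cdots\prec x_n$. *)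

From HB Require Import structures.
From mathcomp Require Import all_boot all_order all_algebra.
From mathcomp Require Import boolp classical_sets.
From mathcomp Require Import Rstruct.
Set Implicit Arguments. Unset Strict Implicit. Unset Printing Implicit Defensive.
Import Order.TTheory GRing.Theory Num.Theory.
Local Open Scope ring_scope.
Local Open Scope classical_set_scope.
Notation R := Rdefinitions.R.

(* The value v 0 is irrelevant (never used).                          *)

Definition discrete_valuation (K : fieldType) (v : K -> int) : Prop :=
  [/\ (forall x y : K, x != 0 -> y != 0 -> v (x * y) = v x + v y),
      (forall x y : K, x != 0 -> y != 0 -> x + y != 0 ->
          Num.min (v x) (v y) <= v (x + y))
    & (exists p : K, p != 0 /\ v p = 1)].

(* x lies in pi^n O_K *)
Definition vsmall (K : fieldType) (v : K -> int) (n : int) (x : K) : Prop :=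
  x = 0 \/ n <= v x.

Definition in_O (K : fieldType) (v : K -> int) (x : K) : Prop := vsmall v 0 x.

Definition v_complete (K : fieldType) (v : K -> int) : Prop :=
  forall a : nat -> K,
    (forall n : int, exists M : nat, forall i j : nat, (M <= i)%N -> (M <= j)%N ->
        vsmall v n (a i - a j)) ->
    exists L : K, forall n : int, exists M : nat, forall i : nat, (M <= i)%N ->
        vsmall v n (a i - L).

Definition finite_residue_field (K : fieldType) (v : K -> int) : Prop :=
  exists r : seq K, forall x : K, in_O v x ->
    exists y : K, [/\ y \in r, in_O v y & vsmall v 1 (x - y)].

Definition char0 (K : fieldType) : Prop := forall n : nat, (0 < n)%N -> n%:R != 0 :> K.

(* K is a finite extension of Q_p (for some prime p), v its normalized valuation:
   equivalently, a complete discretely valued field of characteristic 0 with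
   finite residue field. *)
Definition p_adic_field (K : fieldType) (v : K -> int) : Prop :=
  [/\ discrete_valuation v, v_complete v, finite_residue_field v & char0 K].

(* Lambda = (+)_i O_K e_i inside V = K^{d+1} (row vectors) *)
Definition Lattice (K : fieldType) (v : K -> int) (d : nat) : set 'rV[K]_d.+1 :=
  fun x => forall i, in_O v (x 0 i).
Arguments Lattice {K} v d.

Definition K_subspace (K : fieldType) (d : nat) (W : set 'rV[K]_d.+1) : Prop :=
  [/\ W 0, (forall x y, W x -> W y -> W (x + y)) & (forall (a : K) x, W x -> W (a *: x))].

Definition TK (K : fieldType) (d : nat) : set (set 'rV[K]_d.+1) :=
  fun W => [/\ K_subspace W, (exists w, W w /\ w != 0) & (exists x, ~ W x)].

Definition O_submodule (K : fieldType) (v : K -> int) (d : nat) (U : set 'rV[K]_d.+1) : Prop :=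
  [/\ U 0, (forall x y, U x -> U y -> U (x + y))
    & (forall (a : K) x, in_O v a -> U x -> U (a *: x))].

(* U is generated over O_K by (at most) d elements: d generators, zeros allowed *)
Definition generated_by_d (K : fieldType) (v : K -> int) (d : nat) (U : set 'rV[K]_d.+1) : Prop :=
  exists g : 'I_d -> 'rV[K]_d.+1,
    U = fun u => exists a : 'I_d -> K, (forall i, in_O v (a i)) /\ u = \sum_(i < d) a i *: g i.

Definition TO (K : fieldType) (v : K -> int) (pi : K) (d : nat) : set (set 'rV[K]_d.+1) :=
  fun U => [/\ O_submodule v U, U `<=` Lattice v d,
               ~ (U `<=` (fun u => exists w, Lattice v d w /\ u = pi *: w))
             & generated_by_d v U].

Definition psi (K : fieldType) (v : K -> int) (d : nat) (W : set 'rV[K]_d.+1) : set 'rV[K]_d.+1 :=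
  W `&` Lattice v d.

(* Geometric realization of the order complex of a poset (C, le),     *)
(* C a carrier predicate on an ambient type P, with the weak topology. *)
(* A bary is a function P -> R (barycentric coordinates).            *)

Definition simplex (n : nat) : set ('I_n.+1 -> R) :=
  fun l => (forall i, 0 <= l i) /\ \sum_(i < n.+1) l i = 1.
Arguments simplex : clear implicits.

(* (possibly degenerate) chain c 0 <= c 1 <= ... <= c n in C *)
Definition chain_in (P : Type) (C : set P) (le : P -> P -> Prop) (n : nat)
    (c : 'I_n.+1 -> P) : Prop :=
  (forall i, C (c i)) /\ (forall i j : 'I_n.+1, (i <= j)%N -> le (c i) (c j)).

Definition bary (P : Type) (n : nat) (c : 'I_n.+1 -> P) (l : 'I_n.+1 -> R) : P -> R :=
  fun x => \sum_(i < n.+1) (if `[< c i = x >] then l i else 0).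

Definition realization (P : Type) (C : set P) (le : P -> P -> Prop) : set (P -> R) :=
  fun t => exists n (c : 'I_n.+1 -> P) (l : 'I_n.+1 -> R),
    [/\ chain_in C le c, simplex n l & t = bary c l].

Definition rel_open_simplex (n : nat) (A : set ('I_n.+1 -> R)) : Prop :=
  forall l, A l -> exists2 e : R, 0 < e &
    forall m, simplex n m -> (forall i, `|m i - l i| < e) -> A m.

Definition weak_open (P : Type) (C : set P) (le : P -> P -> Prop) (U : set (P -> R)) : Prop :=
  U `<=` realization C le /\
  forall n (c : 'I_n.+1 -> P), chain_in C le c ->
    rel_open_simplex (fun l => simplex n l /\ U (bary c l)).

(* open subsets of [0,1] x |X| in the product topology *)
Definition prod_open (P : Type) (C : set P) (le : P -> P -> Prop)
    (U : R -> (P -> R) -> Prop) : Prop :=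
  (forall s t, U s t -> (0 <= s <= 1) /\ realization C le t) /\
  forall s t, U s t -> exists2 e : R, 0 < e & exists O : set (P -> R),
    [/\ weak_open C le O, O t &
        forall s' t', 0 <= s' <= 1 -> `|s' - s| < e -> O t' -> U s' t'].

Definition real_cont (P Q : Type) (CP : set P) (leP : P -> P -> Prop)
    (CQ : set Q) (leQ : Q -> Q -> Prop) (f : (P -> R) -> (Q -> R)) : Prop :=
  (forall t, realization CP leP t -> realization CQ leQ (f t)) /\
  forall V, weak_open CQ leQ V ->
    weak_open CP leP (fun t => realization CP leP t /\ V (f t)).

Definition homotopy_cont (P Q : Type) (CP : set P) (leP : P -> P -> Prop)
    (CQ : set Q) (leQ : Q -> Q -> Prop) (H : R -> (P -> R) -> (Q -> R)) : Prop :=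
  (forall s t, 0 <= s <= 1 -> realization CP leP t -> realization CQ leQ (H s t)) /\
  forall V, weak_open CQ leQ V ->
    prod_open CP leP (fun s t => [/\ 0 <= s <= 1, realization CP leP t & V (H s t)]).

Definition homotopic (P Q : Type) (CP : set P) (leP : P -> P -> Prop)
    (CQ : set Q) (leQ : Q -> Q -> Prop) (f g : (P -> R) -> (Q -> R)) : Prop :=
  exists H, homotopy_cont CP leP CQ leQ H /\
    forall t, realization CP leP t -> H 0 t = f t /\ H 1 t = g t.

Definition homotopy_equivalence (P Q : Type) (CP : set P) (leP : P -> P -> Prop)
    (CQ : set Q) (leQ : Q -> Q -> Prop) (f : (P -> R) -> (Q -> R)) : Prop :=
  real_cont CP leP CQ leQ f /\
  exists g : (Q -> R) -> (P -> R),
    [/\ real_cont CQ leQ CP leP g,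
        homotopic CP leP CP leP (g \o f) id
      & homotopic CQ leQ CQ leQ (f \o g) id].

Definition incl (T : Type) (A B : set T) : Prop := A `<=` B.
Arguments TK : clear implicits.
Arguments TO {K} v pi d.

(* The maps W |-> W \cap Lambda and U |-> K U are order preserving between T_K(V) and
   T_{O_K}(Lambda), with K (W \cap Lambda) = W and U <= K U \cap Lambda.  On realizations
   the first composite is therefore the identity, and the second is induced by a monotone
   map h with x <= h x, which is homotopic to the identity: at time s a point sum_i l_i c_i
   of the simplex of a chain c_0 <= ... <= c_n keeps the first s of its mass (in chain
   order) at the c_i and moves the rest to the h c_i.  Grouping the mass by vertices shows
   that this is well defined on the realization; where s lies in the k-th bucket of mass it
   is affine on the simplex of c_0 <= ... <= c_k <= h c_k <= ... <= h c_n, which gives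
   continuity, uniformly in s by compactness of [0, 1].
   The valuation only enters to show that W \cap Lambda lies in T_{O_K}(Lambda): rescaling
   by a coordinate of least valuation produces a vector outside pi Lambda, and if e_j is
   not in W the elements of W \cap Lambda are determined by their d other coordinates, so
   one generator of least valuation per coordinate suffices. *)

From HB Require Import structures.
From mathcomp Require Import all_boot all_order all_algebra.
From mathcomp Require Import boolp classical_sets reals.
From mathcomp Require Import Rstruct.
From mathcomp.algebra_tactics Require Import lra.
From mathcomp Require Import zify.
Set Implicit Arguments. Unset Strict Implicit. Unset Printing Implicit Defensive.
Import Order.TTheory GRing.Theory Num.Theory.
Local Open Scope ring_scope.
Local Open Scope classical_set_scope.

(** * Barycentric coordinates and induced maps *)

Section FibreSums.
Variable P : Type.

Lemma sum_saturated_eq0 (I : finType) (f : I -> P) (e : I -> R) :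
  (forall i, \sum_(j | `[< f j = f i >]) e j = 0) ->
  forall S : {set I}, (forall i j, i \in S -> f j = f i -> j \in S) ->
  \sum_(j in S) e j = 0.
Proof.
move=> fibre0 S; have [n] := ubnP #|S|; elim: n S => [|n IHn] S //.
move=> ltSn satS; have [->|[i iS]] := set_0Vmem S; first by rewrite big_set0.
pose Fi := finset (fun j => `[< f j = f i >]).
rewrite (big_setID Fi) /=.
have -> : \sum_(j in S :&: Fi) e j = 0.
  rewrite -[RHS](fibre0 i); apply: eq_bigl => j; rewrite !inE.
  by case: asboolP => fj; rewrite ?andbT ?andbF //; apply: (satS i).
rewrite add0r; apply: IHn.
  rewrite -ltnS (leq_trans _ ltSn) // ltnS; apply: proper_card; apply/properP.
  by split; [exact: subsetDl | exists i => //; rewrite !inE asboolT // andbF].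
move=> a b; rewrite !inE => /andP[aFi aS] fba; rewrite (satS a) // andbT.
by apply: contra aFi => /asboolP fbi; apply/asboolP; rewrite -fba.
Qed.

Lemma sum_preim_eq0 (I : finType) (f : I -> P) (e : I -> R) :
  (forall i, \sum_(j | `[< f j = f i >]) e j = 0) ->
  forall A : set P, \sum_(j | `[< A (f j) >]) e j = 0.
Proof.
move=> fibre0 A; pose S := finset (fun j => `[< A (f j) >]).
rewrite -[RHS](@sum_saturated_eq0 _ _ _ fibre0 S).
  by apply: eq_bigl => j; rewrite inE.
by move=> i j; rewrite !inE => /asboolP Afi fji; apply/asboolP; rewrite fji.
Qed.

Lemma eq_sum_preim (I J : finType) (f : I -> P) (g : J -> P) (e : I -> R) (e' : J -> R) :
  (forall y, \sum_(i | `[< f i = y >]) e i = \sum_(j | `[< g j = y >]) e' j) ->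
  forall A : set P, \sum_(i | `[< A (f i) >]) e i = \sum_(j | `[< A (g j) >]) e' j.
Proof.
move=> eq_fibre A.
pose fg (k : I + J) := match k with inl i => f i | inr j => g j end.
pose ee' (k : I + J) := match k with inl i => e i | inr j => - e' j end.
have sum_diff (B : set P) : \sum_(k | `[< B (fg k) >]) ee' k =
    \sum_(i | `[< B (f i) >]) e i - \sum_(j | `[< B (g j) >]) e' j.
  by rewrite big_sumType /= sumrN.
apply/eqP; rewrite -subr_eq0 -sum_diff sum_preim_eq0 // => k.
by rewrite (sum_diff (fun y => y = fg k)) eq_fibre subrr.
Qed.

End FibreSums.

Lemma baryE (P : Type) n (c : 'I_n.+1 -> P) l x :
  bary c l x = \sum_(i | `[< c i = x >]) l i.
Proof. by rewrite /bary [RHS]big_mkcond. Qed.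

Lemma eq_bary_sum_preim (P : Type) n m (c : 'I_n.+1 -> P) l (c' : 'I_m.+1 -> P) l' :
  bary c l = bary c' l' -> forall A : set P,
  \sum_(i | `[< A (c i) >]) l i = \sum_(j | `[< A (c' j) >]) l' j.
Proof. by move=> eq_cc'; apply: eq_sum_preim => y; rewrite -!baryE eq_cc'. Qed.

(* Pushes barycentric coordinates forward along [phi]; junk off the realization. *)
Definition bary_map (P Q : Type) (phi : P -> Q) (t : P -> R) : Q -> R :=
  fun x => xget 0 (fun r => exists n (c : 'I_n.+1 -> P) (l : 'I_n.+1 -> R),
                      t = bary c l /\ r = bary (phi \o c) l x).

Lemma bary_mapE (P Q : Type) (phi : P -> Q) n (c : 'I_n.+1 -> P) l :
  bary_map phi (bary c l) = bary (phi \o c) l.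
Proof.
apply/funext => x; apply: xget_unique; first by exists n, c, l.
move=> r [m [c' [l' [eq_cc' ->]]]]; rewrite !baryE.
exact: (eq_bary_sum_preim (esym eq_cc') (fun y => phi y = x)).
Qed.

Section BaryMap.
Variables (P : Type) (C : set P) (le : P -> P -> Prop).

Lemma bary_map_comp (Q S : Type) (phi : Q -> S) (chi : P -> Q) t :
  realization C le t -> bary_map phi (bary_map chi t) = bary_map (phi \o chi) t.
Proof. by move=> [n [c [l [_ _ ->]]]]; rewrite !bary_mapE. Qed.

Lemma bary_map_id_on (phi : P -> P) t : (forall x, C x -> phi x = x) ->
  realization C le t -> bary_map phi t = t.
Proof.
move=> phi_id [n [c [l [[cC _] _ ->]]]]; rewrite bary_mapE.
by congr bary; apply/funext => i; apply: phi_id.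
Qed.

Lemma bary_map_real_cont (Q : Type) (D : set Q) (leD : Q -> Q -> Prop) (phi : P -> Q) :
  (forall n (c : 'I_n.+1 -> P), chain_in C le c -> chain_in D leD (phi \o c)) ->
  real_cont C le D leD (bary_map phi).
Proof.
move=> phi_chain; split.
  move=> t [n [c [l [ch sl ->]]]]; rewrite bary_mapE.
  by exists n, (phi \o c), l; split => //; apply: phi_chain.
move=> V [_ Vopen]; split; first by move=> t [].
move=> n c ch l [sl [_ Vl]].
have [|e e_gt0 Ve] := Vopen n (phi \o c) (phi_chain _ _ ch) l.
  by split => //; rewrite -bary_mapE.
exists e => // m sm lm_close; split => //; split; first by exists n, c, m.
by rewrite bary_mapE; case: (Ve m sm lm_close).
Qed.

Lemma homotopic_id_on (f : (P -> R) -> (P -> R)) :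
  (forall t, realization C le t -> f t = t) -> homotopic C le C le f id.
Proof.
move=> f_id; exists (fun _ t => t); split; last by move=> t /f_id.
split=> [s t _ //|V Vopen]; split=> [s t [] //|s t [s01 _ Vt]].
exists 1 => //; exists V; split=> // s' t' s01' _ Vt'.
by split => //; apply: Vopen.1.
Qed.

Lemma homotopic_eq_on (Q : Type) (D : set Q) (leD : Q -> Q -> Prop)
    (f f' g : (P -> R) -> (Q -> R)) :
  (forall t, realization C le t -> f t = f' t) ->
  homotopic C le D leD f g -> homotopic C le D leD f' g.
Proof.
move=> eq_ff' [H [Hcont Hends]]; exists H; split => // t rt.
by rewrite -(eq_ff' t rt); apply: Hends.
Qed.

End BaryMap.

(** * An inflationary map is homotopic to the identity *)

Definition clamp (w z : R) : R := if z <= 0 then 0 else if w <= z then w else z.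

Ltac case_clamp := rewrite /clamp; repeat match goal with
  |- context[if ?a <= ?b then _ else _] => case: (leP a b) => ? end.

Lemma clamp_split (w w' z : R) : 0 <= w -> 0 <= w' ->
  clamp w z + clamp w' (z - w) = clamp (w + w') z.
Proof. by move=> ? ?; case_clamp; lra. Qed.

Lemma clamp_ge0 w z : 0 <= w -> 0 <= clamp w z.
Proof. by move=> ?; case_clamp; lra. Qed.

Lemma clamp_le w z : 0 <= w -> clamp w z <= w.
Proof. by move=> ?; case_clamp; lra. Qed.

Lemma clamp_lipschitz w z w' z' : 0 <= w -> 0 <= w' ->
  `|clamp w z - clamp w' z'| <= `|w - w'| + `|z - z'|.
Proof.
move=> ? ?; have := ler_norm (w - w'); have := ler_norm (w' - w).
have := ler_norm (z - z'); have := ler_norm (z' - z).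
rewrite (distrC w') (distrC z') ler_norml => ? ? ? ?.
by apply/andP; split; case_clamp; lra.
Qed.

Lemma big_nat_clamp_telescope (N : nat) (Q : pred nat) (w : nat -> R) z :
  (forall i, 0 <= w i) ->
  \sum_(0 <= i < N) (if Q i then
      clamp (w i) (z - \sum_(0 <= j < i) (if Q j then w j else 0)) else 0)
  = clamp (\sum_(0 <= i < N) (if Q i then w i else 0)) z.
Proof.
move=> w_ge0; elim: N => [|N IHN]; first by rewrite !big_geq //; case_clamp; lra.
rewrite !big_nat_recr //= IHN; case: (Q N); last by rewrite !addr0.
by rewrite clamp_split //; apply: sumr_ge0 => i _; case: (Q i).
Qed.

Lemma big_ord_clamp_telescope n (Q : pred 'I_n.+1) (l : 'I_n.+1 -> R) z :
  (forall i, 0 <= l i) ->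
  \sum_(i | Q i) clamp (l i) (z - \sum_(j : 'I_n.+1 | (j < i)%N && Q j) l j)
    = clamp (\sum_(i | Q i) l i) z.
Proof.
move=> l_ge0; pose w k := l (inord k); pose Q' k := Q (inord k).
have w_ge0 k : 0 <= w k by apply: l_ge0.
have toNat (F : 'I_n.+1 -> R) :
    \sum_(i | Q i) F i = \sum_(0 <= k < n.+1) (if Q' k then F (inord k) else 0).
  by rewrite big_mkcond big_mkord; apply: eq_bigr => i _; rewrite /Q' inord_val.
rewrite !toNat -(big_nat_clamp_telescope _ _ _ w_ge0); apply: eq_big_nat => k /andP[_ lt_kn].
case: ifP => // _; congr (clamp _ (_ - _)); rewrite big_mkcond /=.
rewrite (big_nat_widen _ _ n.+1) ?(ltnW lt_kn) // big_mkord [RHS]big_mkcond /=.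
by apply: eq_bigr => j _; rewrite /Q' /w inord_val inordK //; case: ltnP.
Qed.

Section Mass.
Variables (n : nat) (l : 'I_n.+1 -> R).

Definition mass_before (i : nat) := \sum_(j < n.+1 | (j < i)%N) l j.
Definition kept (s : R) (i : 'I_n.+1) := clamp (l i) (s - mass_before i).
Definition moved (s : R) (i : 'I_n.+1) := l i - kept s i.
Definition splits_at (s : R) (k : 'I_n.+1) :=
  mass_before k <= s /\ s <= mass_before k + l k.

Hypothesis l_ge0 : forall i, 0 <= l i.

Lemma mass_before_ge0 k : 0 <= mass_before k.
Proof. exact: sumr_ge0. Qed.

Lemma mass_before0 : mass_before 0 = 0.
Proof. by rewrite /mass_before big_pred0. Qed.

Lemma mass_beforeS k : (k < n.+1)%N -> mass_before k.+1 = mass_before k + l (inord k).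
Proof.
move=> lt_kn; rewrite /mass_before (bigD1 (inord k)) /= ?inordK // addrC.
congr (_ + _); apply: eq_bigl => j; rewrite ltnS.
have [->|neq_jk] := eqVneq j (inord k); first by rewrite inordK // ltnn andbF.
have neq_jk' : (j : nat) != k by apply: contra neq_jk => /eqP <-; rewrite inord_val.
by rewrite andbT ltn_neqAle neq_jk'.
Qed.

Lemma mass_before_all : mass_before n.+1 = \sum_j l j.
Proof. by apply: eq_bigl => j; rewrite ltn_ord. Qed.

Lemma mass_before_mono k k' : (k <= k')%N -> mass_before k <= mass_before k'.
Proof.
move=> le_kk'; rewrite [leRHS](bigID (fun j : 'I_n.+1 => (j < k)%N)) /=.
rewrite [X in X + _](eq_bigl (fun j : 'I_n.+1 => (j < k)%N)) ?lerDl ?sumr_ge0 // => j.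
by case: (ltnP j k) => lt_jk; rewrite ?andbT ?andbF // (leq_trans lt_jk le_kk').
Qed.

Lemma kept_after s k (i : 'I_n.+1) : splits_at s k -> (k < i)%N -> kept s i = 0.
Proof.
move=> [? ?] lt_ki; have := mass_before_mono lt_ki.
by rewrite mass_beforeS ?inord_val // /kept => ?; case_clamp; lra.
Qed.

Lemma kept_before s k (i : 'I_n.+1) : splits_at s k -> (i < k)%N -> kept s i = l i.
Proof.
move=> [? ?] lt_ik; have := mass_before_mono lt_ik; have := l_ge0 i.
by rewrite mass_beforeS ?inord_val // /kept => ? ?; case_clamp; lra.
Qed.

Lemma kept0 (i : 'I_n.+1) : kept 0 i = 0.
Proof.
by rewrite /kept; have := mass_before_ge0 i; have := l_ge0 i => ? ?; case_clamp; lra.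
Qed.

Lemma kept1 (i : 'I_n.+1) : \sum_j l j = 1 -> kept 1 i = l i.
Proof.
move=> sum1; have := mass_before_mono (ltn_ord i); have := l_ge0 i.
by rewrite mass_beforeS ?inord_val // mass_before_all sum1 /kept => ? ?; case_clamp; lra.
Qed.

Lemma exists_splits_at s : \sum_j l j = 1 -> 0 <= s <= 1 -> exists k, splits_at s k.
Proof.
move=> sum1 /andP[s_ge0 s_le1]; apply: contrapT => no_split.
suff below k : (k <= n.+1)%N -> mass_before k <= s.
  have := mass_beforeS (ltnSn n); rewrite mass_before_all sum1 => total.
  have inord_max : inord n = ord_max :> 'I_n.+1 by apply: val_inj; rewrite /= inordK.
  apply: no_split; exists ord_max; split; first exact: below.
  by rewrite inord_max in total; have := below _ (leqnSn n); lra.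
elim: k => [_|k IHk lt_kn]; first by rewrite mass_before0.
rewrite mass_beforeS //; case: leP => // above; exfalso; apply: no_split.
by exists (inord k); rewrite /splits_at inordK //; split; [apply/IHk/ltnW | lra].
Qed.

End Mass.

Lemma mass_before_lipschitz n (l m : 'I_n.+1 -> R) k :
  `|mass_before m k - mass_before l k| <= \sum_j `|m j - l j|.
Proof.
rewrite /mass_before -sumrB (le_trans (ler_norm_sum _ _ _)) //.
by rewrite [leRHS](bigID (fun j : 'I_n.+1 => (j < k)%N)) /= lerDl sumr_ge0.
Qed.

Section Shift.
Variables (P : Type) (C : set P) (le : P -> P -> Prop).
Hypothesis le_anti : forall x y, le x y -> le y x -> x = y.
Hypothesis le_trans : forall x y z, le x y -> le y z -> le x z.
Variable h : P -> P.
Hypothesis hC : forall x, C x -> C (h x).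
Hypothesis h_mono : forall x y, C x -> C y -> le x y -> le (h x) (h y).
Hypothesis h_ge : forall x, C x -> le x (h x).

(* The right-hand side depends on [c] and [l] only through [bary c l]. *)
Lemma sum_kept_fibre n (c : 'I_n.+1 -> P) (l : 'I_n.+1 -> R) s y :
  (forall i j : 'I_n.+1, (i <= j)%N -> le (c i) (c j)) -> (forall i, 0 <= l i) ->
  \sum_(i | `[< c i = y >]) kept l s i =
  clamp (\sum_(i | `[< c i = y >]) l i) (s - \sum_(i | `[< c i <> y /\ le (c i) y >]) l i).
Proof.
move=> c_mono l_ge0; set below := \sum_(i | `[< _ /\ _ >]) l i.
have mass_fibre i : c i = y ->
    mass_before l i = below + \sum_(j : 'I_n.+1 | (j < i)%N && `[< c j = y >]) l j.
  move=> ciy; rewrite /mass_before (bigID (fun j => `[< c j = y >])) /= addrC.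
  congr (_ + _); apply: eq_bigl => j; apply/idP/idP.
    move=> /andP[lt_ji /asboolPn cjy]; apply/asboolP; split => //.
    by rewrite -ciy; apply/c_mono/ltnW.
  move=> /asboolP [cjy le_cjy]; rewrite andbC; apply/andP; split; first exact/asboolPn.
  rewrite ltnNge; apply/negP => le_ij; apply: cjy; apply: le_anti => //.
  by rewrite -ciy; apply: c_mono.
rewrite -big_ord_clamp_telescope //; apply: eq_bigr => i /asboolP ciy.
by rewrite /kept (mass_fibre i ciy) opprD addrA.
Qed.

(* At time [s] the first [s] of the total mass, in chain order, stays at [c i];
   the rest has moved to [h (c i)]. *)
Definition bary_shift s n (c : 'I_n.+1 -> P) (l : 'I_n.+1 -> R) : P -> R :=
  fun x => bary c (kept l s) x + bary (h \o c) (moved l s) x.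

Lemma bary_shift_wd s n m (c : 'I_n.+1 -> P) l (c' : 'I_m.+1 -> P) l' :
  chain_in C le c -> chain_in C le c' -> simplex n l -> simplex m l' ->
  bary c l = bary c' l' -> bary_shift s c l = bary_shift s c' l'.
Proof.
move=> [_ c_mono] [_ c'_mono] [l_ge0 _] [l'_ge0 _] eq_cc'.
have fibre_kept y : \sum_(i | `[< c i = y >]) kept l s i =
                    \sum_(j | `[< c' j = y >]) kept l' s j.
  rewrite !sum_kept_fibre //; congr (clamp _ (_ - _)).
    exact: (eq_bary_sum_preim eq_cc' (fun z => z = y)).
  exact: (eq_bary_sum_preim eq_cc' (fun z => z <> y /\ le z y)).
apply/funext => x; rewrite /bary_shift !baryE /moved /= !sumrB.
congr (_ + (_ - _)).
- exact: fibre_kept.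
- exact: (eq_bary_sum_preim eq_cc' (fun z => h z = x)).
- exact: (eq_sum_preim fibre_kept (fun z => h z = x)).
Qed.

Definition shift_homotopy (s : R) (t : P -> R) : P -> R :=
  fun x => xget 0 (fun r => exists n (c : 'I_n.+1 -> P) (l : 'I_n.+1 -> R),
     [/\ chain_in C le c, simplex n l, t = bary c l & r = bary_shift s c l x]).

Lemma shift_homotopyE s n (c : 'I_n.+1 -> P) l : chain_in C le c -> simplex n l ->
  shift_homotopy s (bary c l) = bary_shift s c l.
Proof.
move=> ch sl; apply/funext => x; apply: xget_unique; first by exists n, c, l.
by move=> r [m [c' [l' [ch' sl' eq_c'c ->]]]]; rewrite (bary_shift_wd s ch' ch sl' sl).
Qed.

Definition shift_weights n (l : 'I_n.+1 -> R) s : 'I_(n.+1 + n.+1) -> R :=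
  fun j => match split j with inl i => kept l s i | inr i => moved l s i end.

Definition shift_chain n (c : 'I_n.+1 -> P) (k : 'I_n.+1) : 'I_(n.+1 + n.+1) -> P :=
  fun j => match split j with
           | inl i => c (if (i <= k)%N then i else k)
           | inr i => h (c (if (k <= i)%N then i else k)) end.

Lemma shift_weights_simplex n (l : 'I_n.+1 -> R) s :
  simplex n l -> simplex (n + n.+1) (shift_weights l s).
Proof.
move=> [l_ge0 sum1]; split.
  move=> j; rewrite /shift_weights; case: split => i; rewrite /moved ?subr_ge0.
    exact: clamp_ge0.
  exact: clamp_le.
rewrite -sum1; change (\sum_(i < n.+1 + n.+1) shift_weights l s i = \sum_i l i).
rewrite big_split_ord /=.
under eq_bigr do rewrite /shift_weights (unsplitK (inl _)).
under [X in _ + X]eq_bigr do rewrite /shift_weights (unsplitK (inr _)).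
by rewrite -big_split /=; apply: eq_bigr => i _; rewrite /moved addrC subrK.
Qed.

Lemma shift_chain_in n (c : 'I_n.+1 -> P) k :
  chain_in C le c -> chain_in C le (shift_chain c k).
Proof.
move=> [cC c_mono]; split.
  by move=> j; rewrite /shift_chain; case: split => i; [|apply: hC]; apply: cC.
move=> j1 j2; rewrite /shift_chain.
case: splitP => i1 ->; case: splitP => i2 -> le_j12.
- by apply: c_mono; case: (leqP i1 k); case: (leqP i2 k); lia.
- apply: (@le_trans _ (c k)); first by apply: c_mono; case: (leqP i1 k); lia.
  apply: (le_trans (h_ge (cC k))); apply: h_mono; try exact: cC.
  by apply: c_mono; case: (leqP k i2); lia.
- by move: le_j12; rewrite leqNgt ltn_addr.
- apply: h_mono; try exact: cC; apply: c_mono; rewrite leq_add2l in le_j12.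
  by case: (leqP k i1); case: (leqP k i2); lia.
Qed.

(* On the region where the time [s] falls in the [k]-th bucket of mass, the homotopy
   is affine in the barycentric coordinates of the doubled chain [shift_chain c k]. *)
Lemma bary_shift_split n (c : 'I_n.+1 -> P) l s k : (forall j, 0 <= l j) ->
  splits_at l s k -> bary_shift s c l = bary (shift_chain c k) (shift_weights l s).
Proof.
move=> l_ge0 split_k; apply/funext => x; rewrite /bary_shift.
change (bary c (kept l s) x + bary (h \o c) (moved l s) x = \sum_(i < n.+1 + n.+1)
   (if `[< shift_chain c k i = x >] then shift_weights l s i else 0)).
rewrite /bary big_split_ord /=; congr (_ + _); apply: eq_bigr => i _.
  rewrite /shift_chain /shift_weights (unsplitK (inl _)).
  case: (leqP i k) => // lt_ki.
  by rewrite (kept_after l_ge0 split_k lt_ki); do 2 case: asboolP.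
rewrite /shift_chain /shift_weights (unsplitK (inr _)).
case: (leqP k i) => // lt_ik; rewrite /moved (kept_before l_ge0 split_k lt_ik) subrr.
by do 2 case: asboolP.
Qed.

Lemma bary_shift_real n (c : 'I_n.+1 -> P) l s : chain_in C le c -> simplex n l ->
  0 <= s <= 1 -> realization C le (bary_shift s c l).
Proof.
move=> ch [l_ge0 sum1] s01; have [k split_k] := exists_splits_at sum1 s01.
exists (n + n.+1), (shift_chain c k), (shift_weights l s); split.
- exact: shift_chain_in.
- exact: shift_weights_simplex.
- exact: bary_shift_split.
Qed.

Lemma bary_shift0 n (c : 'I_n.+1 -> P) l : simplex n l -> bary_shift 0 c l = bary (h \o c) l.
Proof.
move=> [l_ge0 _]; apply/funext => x; rewrite /bary_shift /bary /moved.
rewrite big1 ?add0r => [|i _]; last by rewrite kept0 //; case: asboolP.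
by apply: eq_bigr => i _; rewrite kept0 // subr0.
Qed.

Lemma bary_shift1 n (c : 'I_n.+1 -> P) l : simplex n l -> bary_shift 1 c l = bary c l.
Proof.
move=> [l_ge0 sum1]; apply/funext => x; rewrite /bary_shift /bary /moved.
rewrite [X in _ + X]big1 ?addr0 => [|i _]; last by rewrite kept1 // subrr; case: asboolP.
by apply: eq_bigr => i _; rewrite kept1.
Qed.

End Shift.
Lemma fin_common_radius (T : finType) (Q : T -> R -> Prop) :
  (forall k, exists2 d, 0 < d & Q k d) ->
  (forall k d d', 0 < d' -> d' <= d -> Q k d -> Q k d') ->
  exists2 d, 0 < d & forall k, Q k d.
Proof.
move=> radius Q_mono; have /choice [f f_ok] : forall k, exists d, 0 < d /\ Q k d.
  by move=> k; have [d ? ?] := radius k; exists d.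
have f_gt0 k : 0 < f k by case: (f_ok k).
pose S := \sum_k (f k)^-1.
have S_ge0 : 0 <= S by apply: sumr_ge0 => k _; rewrite invr_ge0 ltW.
exists (1 + S)^-1 => [|k]; first by rewrite invr_gt0; lra.
apply: (Q_mono k (f k)); [by rewrite invr_gt0; lra | | by case: (f_ok k)].
have fk_le : (f k)^-1 <= S.
  by rewrite /S (bigD1 k) //= lerDl sumr_ge0 // => j _; rewrite invr_ge0 ltW.
by rewrite -[leRHS]invrK lef_pV2 ?posrE ?invr_gt0 //; lra.
Qed.

Definition close n (d : R) (m l : 'I_n.+1 -> R) := forall j, `|m j - l j| < d.

Section Closeness.
Variables (n : nat) (d : R) (l m : 'I_n.+1 -> R).
Hypothesis close_ml : close d m l.

Lemma mass_before_close k : `|mass_before m k - mass_before l k| <= n.+1%:R * d.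
Proof.
apply: le_trans (mass_before_lipschitz l m k) (le_trans (_ : _ <= \sum_(j < n.+1) d) _).
  by apply: ler_sum => j _; apply/ltW.
by rewrite sumr_const card_ord mulr_natl.
Qed.

Hypotheses (l_ge0 : forall j, 0 <= l j) (m_ge0 : forall j, 0 <= m j).

Lemma kept_close s s1 i : `|s - s1| < d -> `|kept m s i - kept l s1 i| <= n.+3%:R * d.
Proof.
move=> close_s; apply: le_trans (clamp_lipschitz _ _ (m_ge0 i) (l_ge0 i)) _.
have /ler_normlP[? ?] := mass_before_close i.
have /ltr_normlP[? ?] := close_s; have := ltW (close_ml i).
have : `|s - mass_before m i - (s1 - mass_before l i)| <= n.+1%:R * d + d.
  by rewrite ler_norml; apply/andP; split; lra.
have -> : n.+3%:R = n.+1%:R + 2 :> R by rewrite -addn2 natrD.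
by rewrite mulrDl; lra.
Qed.

Lemma moved_close s s1 i : `|s - s1| < d -> `|moved m s i - moved l s1 i| <= n.+4%:R * d.
Proof.
move=> close_s; have /ler_normlP[? ?] := kept_close i close_s.
have /ltr_normlP[? ?] := close_ml i.
have -> : n.+4%:R = n.+3%:R + 1 :> R by rewrite -addn1 natrD.
by rewrite /moved mulrDl ler_norml; apply/andP; split; lra.
Qed.

End Closeness.

Lemma not_splits_at_stable n (l1 : 'I_n.+1 -> R) s1 k : ~ splits_at l1 s1 k ->
  exists2 d, 0 < d & forall s m, `|s - s1| < d -> close d m l1 -> ~ splits_at m s k.
Proof.
have split_gap (g : R) : 0 < g -> exists d, 0 < d /\ n.+1%:R * d + 2 * d = g.
  move=> g_gt0; have n3_gt0 : 0 < n.+3%:R :> R by rewrite ltr0n.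
  exists (g / n.+3%:R); split; first by rewrite divr_gt0.
  by rewrite -mulrDl -natrD addn2 mulrCA divff ?mulr1 ?gt_eqF.
move=> no_split; set M := mass_before l1 k.
have [lt_s1M|le_Ms1] := ltP s1 M.
  have [|d [d_gt0 gapE]] := split_gap (M - s1); first by rewrite subr_gt0.
  exists d => // s m /ltr_normlP[? ?] close_m [? ?].
  by move: (mass_before_close close_m k); rewrite -/M => /ler_normlP[? ?]; lra.
have lt_s1 : M + l1 k < s1 by rewrite ltNge; apply/negP => ?; exact: no_split.
have [|d [d_gt0 gapE]] := split_gap (s1 - (M + l1 k)); first by rewrite subr_gt0.
exists d => // s m /ltr_normlP[? ?] close_m [? ?]; have /ltr_normlP[? ?] := close_m k.
by move: (mass_before_close close_m k); rewrite -/M => /ler_normlP[? ?]; lra.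
Qed.

Section ShiftContinuity.
Variables (P : Type) (C : set P) (le : P -> P -> Prop).
Hypothesis le_trans : forall x y z, le x y -> le y z -> le x z.
Variable h : P -> P.
Hypothesis hC : forall x, C x -> C (h x).
Hypothesis h_mono : forall x y, C x -> C y -> le x y -> le (h x) (h y).
Hypothesis h_ge : forall x, C x -> le x (h x).
Variable V : set (P -> R).
Hypothesis V_open : weak_open C le V.

Lemma bary_shift_open_at_split n (c : 'I_n.+1 -> P) s1 l1 k :
  chain_in C le c -> simplex n l1 -> splits_at l1 s1 k -> V (bary_shift h s1 c l1) ->
  exists2 d, 0 < d & forall s m, simplex n m -> `|s - s1| < d -> close d m l1 ->
    splits_at m s k -> V (bary_shift h s c m).
Proof.
move=> ch sl1 split1 V1; have l1_ge0 := sl1.1.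
rewrite (bary_shift_split h c l1_ge0 split1) in V1.
have shift_ch := shift_chain_in le_trans hC h_mono h_ge k ch.
have [|e e_gt0 Ve] := V_open.2 _ _ shift_ch (shift_weights l1 s1).
  by split => //; apply: shift_weights_simplex.
have n5_gt0 : 0 < n.+4.+1%:R :> R by rewrite ltr0n.
have small (a : nat) : (a < n.+4.+1)%N -> a%:R * (e / n.+4.+1%:R) < e.
  by move=> lt_a5; rewrite mulrCA gtr_pMr // ltr_pdivrMr // mul1r ltr_nat.
exists (e / n.+4.+1%:R) => [|s m sm close_s close_m split_m]; first by rewrite divr_gt0.
rewrite (bary_shift_split h c sm.1 split_m).
have [|//] := Ve (shift_weights m s) (shift_weights_simplex s sm) => j.
rewrite /shift_weights; case: split => i.
  exact: le_lt_trans (kept_close close_m l1_ge0 sm.1 i close_s) (small _ _).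
exact: le_lt_trans (moved_close close_m l1_ge0 sm.1 i close_s) (small _ _).
Qed.

Lemma bary_shift_open n (c : 'I_n.+1 -> P) s1 l1 :
  chain_in C le c -> simplex n l1 -> 0 <= s1 <= 1 -> V (bary_shift h s1 c l1) ->
  exists2 d, 0 < d & forall s m, 0 <= s <= 1 -> simplex n m ->
    `|s - s1| < d -> close d m l1 -> V (bary_shift h s c m).
Proof.
move=> ch sl1 s01 V1.
pose Q k d := forall s m, simplex n m -> `|s - s1| < d -> close d m l1 ->
  splits_at m s k -> V (bary_shift h s c m).
have [d d_gt0 Qd] : exists2 d, 0 < d & forall k, Q k d.
  apply: fin_common_radius => [k|k d d' d'_gt0 le_d'd Qkd s m sm close_s close_m].
    case: (pselect (splits_at l1 s1 k)) => [split1|no_split1].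
      exact: bary_shift_open_at_split.
    have [d d_gt0 no_split] := not_splits_at_stable no_split1.
    by exists d => // s m _ close_s close_m /(no_split s m close_s close_m).
  apply: Qkd => // [|j]; first exact: lt_le_trans close_s le_d'd.
  exact: lt_le_trans (close_m j) le_d'd.
exists d => // s m s01' sm close_s close_m.
by have [k split_k] := exists_splits_at sm.2 s01'; apply: (Qd k).
Qed.

End ShiftContinuity.

Lemma interval_uniform_radius (a b : R) (Z : R -> R -> Prop) : a <= b ->
  (forall s d d', 0 < d' -> d' <= d -> Z s d -> Z s d') ->
  (forall s, a <= s <= b -> exists2 d, 0 < d &
      forall s', a <= s' <= b -> `|s' - s| < d -> Z s' d) ->
  exists2 e, 0 < e & forall s, a <= s <= b -> Z s e.
Proof.
move=> le_ab Z_mono radius.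
pose good x := a <= x <= b /\ exists2 e, 0 < e & forall s, a <= s <= x -> Z s e.
have good_a : good a.
  split; first by apply/andP; split; lra.
  have [|d d_gt0 Zd] := radius a; first by apply/andP; split; lra.
  exists d => // s /andP[? ?]; have -> : s = a by lra.
  by apply: Zd; [apply/andP; split; lra | rewrite subrr normr0].
have good_sup : has_sup good by split; [exists a | exists b => x [/andP[_ ?] _]].
set x0 := sup good.
have le_ax0 : a <= x0 by apply: sup_upper_bound.
have le_x0b : x0 <= b by apply: ge_sup; [exists a | move=> x [/andP[_ ?] _]].
have [|d d_gt0 Zd] := radius x0; first by apply/andP; split.
have [x good_x] := sup_adherent d_gt0 good_sup; rewrite -/x0 => lt_x.
have [/andP[le_ax le_xb] [ex ex_gt0 Zex]] := good_x.
have le_xx0 : x <= x0 by apply: sup_upper_bound.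
pose e := Num.min ex d.
have e_gt0 : 0 < e by rewrite lt_min ex_gt0 d_gt0.
(* Below [x] use the radius from [good x], near [x0] the one from [radius x0]. *)
have Ze y : y <= b -> y <= x0 + d / 2 -> forall s, a <= s <= y -> Z s e.
  move=> le_yb le_y s /andP[le_as le_sy]; case: (leP s x) => [le_sx|lt_xs].
    by apply: (Z_mono _ ex) => //; [rewrite ge_min lexx | apply: Zex; apply/andP].
  apply: (Z_mono _ d) => //; first by rewrite ge_min lexx orbT.
  apply: Zd; first by rewrite le_as (le_trans le_sy le_yb).
  by rewrite ltr_norml; apply/andP; split; lra.
case: (leP b (x0 + d / 2)) => [le_b|lt_b].
  by exists e => // s /andP[? ?]; apply: (Ze b) => //; apply/andP.
have good_y : good (x0 + d / 2).
  by split; [apply/andP; split; lra | exists e => //; apply: Ze => //; lra].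
by have := sup_upper_bound good_sup good_y; rewrite -/x0; lra.
Qed.

Section ShiftHomotopy.
Variables (P : Type) (C : set P) (le : P -> P -> Prop).
Hypothesis le_anti : forall x y, le x y -> le y x -> x = y.
Hypothesis le_trans : forall x y z, le x y -> le y z -> le x z.
Variable h : P -> P.
Hypothesis hC : forall x, C x -> C (h x).
Hypothesis h_mono : forall x y, C x -> C y -> le x y -> le (h x) (h y).
Hypothesis h_ge : forall x, C x -> le x (h x).

Let H := shift_homotopy C le h.

Lemma shift_homotopy_ends t : realization C le t -> H 0 t = bary_map h t /\ H 1 t = t.
Proof.
move=> [n [c [l [ch sl ->]]]].
by rewrite /H !(shift_homotopyE le_anti) // bary_mapE bary_shift0 // bary_shift1.
Qed.

Lemma shift_homotopy_real s t : 0 <= s <= 1 -> realization C le t -> realization C le (H s t).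
Proof.
move=> s01 [n [c [l [ch sl ->]]]].
by rewrite /H (shift_homotopyE le_anti) //; apply: bary_shift_real.
Qed.

(* Continuity in [t] uniformly for [s] in a compact interval: the tube lemma. *)
Lemma shift_homotopy_tube_open V s0 d : weak_open C le V -> 0 <= s0 <= 1 -> 0 <= d ->
  weak_open C le (fun t => realization C le t /\
    forall s, 0 <= s <= 1 -> `|s - s0| <= d -> V (H s t)).
Proof.
move=> V_open /andP[? ?] d_ge0; split=> [t [] //|n c ch l1 [sl1 [_ V1]]].
pose a := Num.max 0 (s0 - d); pose b := Num.min 1 (s0 + d).
have inI s : (a <= s <= b) = (0 <= s <= 1) && (`|s - s0| <= d).
  rewrite /a /b ge_max le_min ler_norml.
  by apply/idP/idP => /andP[/andP[? ?] /andP[? ?]]; rewrite !lerBlDr; lra.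
pose Z s dd := forall m, simplex n m -> close dd m l1 -> V (bary_shift h s c m).
have le_ab : a <= b by rewrite /a /b ge_max !le_min; lra.
have Z_mono s dd dd' : 0 < dd' -> dd' <= dd -> Z s dd -> Z s dd'.
  move=> _ le_dd Zdd m sm close_m; apply: Zdd => // j.
  exact: lt_le_trans (close_m j) le_dd.
have radius s : a <= s <= b -> exists2 dd, 0 < dd &
    forall s', a <= s' <= b -> `|s' - s| < dd -> Z s' dd.
  rewrite inI => /andP[s01 near_s]; have := V1 s s01 near_s.
  rewrite /H (shift_homotopyE le_anti) // => Vs.
  have [dd dd_gt0 Vdd] := bary_shift_open le_trans hC h_mono h_ge V_open ch sl1 s01 Vs.
  by exists dd => // s'; rewrite inI => /andP[? _] ? m ? ?; apply: Vdd.
have [dd dd_gt0 Zdd] := interval_uniform_radius le_ab Z_mono radius.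
exists dd => // m sm close_m; split => //; split; first by exists n, c, m.
move=> s s01 near_s; rewrite /H (shift_homotopyE le_anti) //.
by apply: Zdd => //; rewrite inI s01 near_s.
Qed.

Lemma shift_homotopy_cont : homotopy_cont C le C le H.
Proof.
split=> [s t|V V_open]; first exact: shift_homotopy_real.
split=> [s t [] //|s0 t0 [s01 [n [c [l [ch sl ->]]]] V0]].
rewrite /H (shift_homotopyE le_anti) // in V0.
have [d d_gt0 Vd] := bary_shift_open le_trans hC h_mono h_ge V_open ch sl s01 V0.
have d2_gt0 : 0 < d / 2 by rewrite divr_gt0.
exists (d / 2) => //; eexists; split.
- exact: (shift_homotopy_tube_open V_open s01 (ltW d2_gt0)).
- split; first by exists n, c, l.
  move=> s s01' near_s; rewrite /H (shift_homotopyE le_anti) //.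
  by apply: Vd => // [|j]; [lra | rewrite subrr normr0].
- by move=> s t s01' near_s [rt Vt]; split => //; apply/Vt/ltW.
Qed.

Lemma inflationary_homotopic_id : homotopic C le C le (bary_map h) id.
Proof. by exists H; split; [exact: shift_homotopy_cont | exact: shift_homotopy_ends]. Qed.

End ShiftHomotopy.

(** * Lattices over a discretely valued field *)

Section Valuation.
Variables (K : fieldType) (v : K -> int).
Hypothesis vM : forall x y : K, x != 0 -> y != 0 -> v (x * y) = v x + v y.
Hypothesis vD : forall x y : K, x != 0 -> y != 0 -> x + y != 0 ->
  Num.min (v x) (v y) <= v (x + y).

Lemma v1 : v 1 = 0.
Proof.
have : v 1 = v 1 + v 1 by have := vM (oner_neq0 K) (oner_neq0 K); rewrite mulr1.
lia.
Qed.

Lemma vV x : x != 0 -> v x^-1 = - v x.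
Proof.
move=> x_neq0; have : v 1 = v x^-1 + v x by rewrite -(mulVf x_neq0) vM ?invr_neq0.
by rewrite v1; lia.
Qed.

Lemma vN1 : v (-1) = 0.
Proof.
have N1_neq0 : (-1 : K) != 0 by rewrite oppr_eq0 oner_neq0.
have : v 1 = v (-1) + v (-1) by rewrite -vM // mulrNN mulr1.
by rewrite v1; lia.
Qed.

Lemma in_O0 : in_O v 0.
Proof. by left. Qed.

Lemma in_OM a b : in_O v a -> in_O v b -> in_O v (a * b).
Proof.
case=> [->|va]; first by rewrite mul0r; left.
case=> [->|vb]; first by rewrite mulr0; left.
have [->|a_neq0] := eqVneq a 0; first by rewrite mul0r; left.
have [->|b_neq0] := eqVneq b 0; first by rewrite mulr0; left.
by right; rewrite vM //; lia.
Qed.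

Lemma in_OD a b : in_O v a -> in_O v b -> in_O v (a + b).
Proof.
case=> [->|va]; first by rewrite add0r.
case=> [->|vb]; first by rewrite addr0; right.
have [->|a_neq0] := eqVneq a 0; first by rewrite add0r; right.
have [->|b_neq0] := eqVneq b 0; first by rewrite addr0; right.
have [->|ab_neq0] := eqVneq (a + b) 0; first by left.
right.
by apply: le_trans (vD a_neq0 b_neq0 ab_neq0); rewrite le_min va vb.
Qed.

Lemma in_ON a : in_O v a -> in_O v (- a).
Proof. by rewrite -mulN1r; apply: in_OM; right; rewrite vN1. Qed.

Lemma in_O_div a b : a != 0 -> b != 0 -> v b <= v a -> in_O v (a / b).
Proof. by move=> a_neq0 b_neq0 le_ba; right; rewrite vM ?invr_neq0 // vV //; lia. Qed.

End Valuation.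

Lemma vX (K : fieldType) (v : K -> int) (p : K) n :
  (forall x y : K, x != 0 -> y != 0 -> v (x * y) = v x + v y) ->
  p != 0 -> v (p ^+ n) = v p *+ n.
Proof.
move=> vM p_neq0; elim: n => [|n IHn]; first by rewrite expr0 v1.
by rewrite exprS vM ?expf_neq0 // IHn mulrS.
Qed.

Definition extend (A : Type) r (f : 'I_r -> A) (z : A) : 'I_r.+1 -> A :=
  fun i => if unlift ord_max i is Some j then f j else z.

Lemma extend_lift (A : Type) r (f : 'I_r -> A) z i : extend f z (lift ord_max i) = f i.
Proof. by rewrite /extend liftK. Qed.

Lemma extend_max (A : Type) r (f : 'I_r -> A) z : extend f z ord_max = z.
Proof. by rewrite /extend unlift_none. Qed.

Lemma sum_extend (R' : nmodType) r (F : 'I_r.+1 -> R') :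
  \sum_(i < r.+1) F i = \sum_(i < r) F (lift ord_max i) + F ord_max.
Proof.
rewrite big_ord_recr /=; congr (_ + _); apply: eq_bigr => i _.
by congr F; apply: val_inj; exact: esym (lift_max i).
Qed.

Section Lattices.
Variables (K : fieldType) (v : K -> int) (d : nat).
Hypothesis vM : forall x y : K, x != 0 -> y != 0 -> v (x * y) = v x + v y.

Definition spans_O (M : set 'rV[K]_d.+1) r (g : 'I_r -> 'rV[K]_d.+1) :=
  forall u, M u -> exists a : 'I_r -> K, (forall i, in_O v (a i)) /\ u = \sum_i a i *: g i.

Lemma O_submodule_sum (M : set 'rV[K]_d.+1) r (g : 'I_r -> 'rV[K]_d.+1) a :
  O_submodule v M -> (forall i, M (g i)) -> (forall i, in_O v (a i)) ->
  M (\sum_i a i *: g i).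
Proof. by move=> [M0 MD MZ] Mg Oa; apply: (big_ind M) => // i _; apply: MZ. Qed.

Lemma exists_min_coord (M : set 'rV[K]_d.+1) j : M `<=` Lattice v d ->
  (exists x, M x /\ x 0 j != 0) ->
  exists y, [/\ M y, y 0 j != 0 & forall u, M u -> in_O v (u 0 j / y 0 j)].
Proof.
move=> ML [x [Mx xj_neq0]].
have vE u : M u -> u 0 j != 0 -> v (u 0 j) = (absz (v (u 0 j)))%:Z.
  move=> Mu uj_neq0; case: (ML u Mu j) => [uj0|?]; last by rewrite gez0_abs.
  by rewrite uj0 eqxx in uj_neq0.
pose val_at k := exists y, [/\ M y, y 0 j != 0 & v (y 0 j) = k%:Z].
have ex_val : exists k, `[< val_at k >].
  by exists (absz (v (x 0 j))); apply/asboolP; exists x; rewrite -vE.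
case: (ex_minnP ex_val) => k /asboolP [y [My yj_neq0 vyj]] k_min.
exists y; split=> // u Mu; have [->|uj_neq0] := eqVneq (u 0 j) 0.
  by rewrite mul0r; apply: in_O0.
apply: in_O_div => //; rewrite vyj (vE u Mu uj_neq0) lez_nat.
by apply/k_min/asboolP; exists u; rewrite -vE.
Qed.

Lemma O_submodule_spanned r (M : set 'rV[K]_d.+1) (J : 'I_r -> 'I_d.+1) :
  O_submodule v M -> M `<=` Lattice v d ->
  (forall x, M x -> (forall i, x 0 (J i) = 0) -> x = 0) ->
  exists g : 'I_r -> 'rV[K]_d.+1, (forall i, M (g i)) /\ spans_O M g.
Proof.
elim: r M J => [|r IHr] M J [M0 MD MZ] ML J_det.
  exists (fun _ => 0); split=> [[]//|u Mu]; exists (fun _ => 0); split=> [[]//|].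
  by rewrite big_ord0; apply: J_det => // [[]].
pose j0 := J ord_max; pose M' x := M x /\ x 0 j0 = 0.
have subM' : O_submodule v M'.
  split=> [|x y [Mx x0] [My y0]|a x Oa [Mx x0]]; rewrite /M' mxE.
  - by split.
  - by rewrite x0 y0 addr0; split => //; apply: MD.
  - by rewrite x0 mulr0; split => //; apply: MZ.
have [|x Mx' det'|g' [Mg' spans']] := IHr M' (J \o lift ord_max) subM'.
- by move=> x [/ML].
- apply: J_det (Mx'.1) _ => i; case: (unliftP ord_max i) => [i' ->|->].
    exact: det'.
  exact: Mx'.2.
(* One extra generator [y] with minimal [j0]-coordinate reduces [M] to [M']. *)
have [y [My reduce]] : exists y, M y /\
    forall u, M u -> exists2 al, in_O v al & M' (u - al *: y).
  case: (pselect (exists x, M x /\ x 0 j0 != 0)) => [ex_x|no_x].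
    have [y [My yj0_neq0 quot]] := exists_min_coord ML ex_x.
    exists y; split=> // u Mu; exists (u 0 j0 / y 0 j0); first exact: quot.
    split; first by rewrite -scaleNr; apply/MD/MZ => //; apply/in_ON/quot.
    by rewrite !mxE divfK // subrr.
  exists 0; split=> // u Mu; exists 0; first exact: in_O0.
  rewrite scale0r subr0; split => //.
  by apply/eqP; apply: contrapT => /negP uj0; apply: no_x; exists u.
exists (extend g' y); split=> [i|u Mu].
  by rewrite /extend; case: (unlift ord_max i) => [i'|//]; case: (Mg' i').
have [al Oal /spans' [a [Oa Ea]]] := reduce u Mu.
exists (extend a al); split=> [i|].
  by rewrite /extend; case: (unlift ord_max i).
rewrite sum_extend !extend_max; under eq_bigr do rewrite !extend_lift.
by rewrite -Ea subrK.
Qed.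

End Lattices.

Section Psi.
Variables (K : fieldType) (v : K -> int) (pi : K) (d : nat).
Hypothesis vM : forall x y : K, x != 0 -> y != 0 -> v (x * y) = v x + v y.
Hypothesis vD : forall x y : K, x != 0 -> y != 0 -> x + y != 0 ->
  Num.min (v x) (v y) <= v (x + y).
Hypothesis pi_neq0 : pi != 0.
Hypothesis v_pi : v pi = 1.

Definition spanK (U : set 'rV[K]_d.+1) : set 'rV[K]_d.+1 :=
  fun x => exists a : K, a != 0 /\ U (a *: x).

Lemma psi_O_submodule (W : set 'rV[K]_d.+1) : K_subspace W -> O_submodule v (psi v W).
Proof.
move=> [W0 WD WZ]; split.
- by split=> // i; rewrite mxE; apply: in_O0.
- move=> x y [Wx Lx] [Wy Ly]; split=> [|i]; first exact: WD.
  by rewrite mxE; apply: in_OD.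
- move=> a x Oa [Wx Lx]; split=> [|i]; first exact: WZ.
  by rewrite mxE; apply: in_OM.
Qed.

(* Rescaling [w] by its coordinate of least valuation gives a vector of [Lambda] with
   a unit coordinate, which therefore does not lie in [pi Lambda]. *)
Lemma psi_not_sub_pi_Lattice (W : set 'rV[K]_d.+1) w : K_subspace W -> W w -> w != 0 ->
  ~ psi v W `<=` (fun u => exists w', Lattice v d w' /\ u = pi *: w').
Proof.
move=> [_ _ WZ] Ww w_neq0 sub_pi.
have [j0 wj0_neq0] : exists j, w 0 j != 0.
  apply: contrapT => all0; move/eqP: w_neq0; apply; apply/rowP => j.
  by rewrite mxE; apply: contrapT => wj; apply: all0; exists j; apply/eqP.
case: (@arg_minP _ _ _ j0 (fun i => w 0 i != 0) (fun i => v (w 0 i)) wj0_neq0).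
move=> j wj_neq0 j_min; pose w' := (w 0 j)^-1 *: w.
have Lw' : Lattice v d w'.
  move=> i; rewrite mxE mulrC; have [->|wi_neq0] := eqVneq (w 0 i) 0.
    by rewrite mul0r; apply: in_O0.
  exact: (in_O_div vM wi_neq0 wj_neq0 (j_min i wi_neq0)).
have [z [Lz Ez]] := sub_pi w' (conj (WZ _ _ Ww) Lw').
have : 1 = pi * z 0 j.
  by have := congr1 (fun m : 'rV[K]_d.+1 => m 0 j) Ez; rewrite /= !mxE mulVf.
move=> one_eq; have zj_neq0 : z 0 j != 0.
  by apply: contra_eq_neq one_eq => ->; rewrite mulr0 oner_neq0.
have := congr1 v one_eq; rewrite vM // v1 // v_pi.
by case: (Lz j) => [zj0|]; [rewrite zj0 eqxx in zj_neq0 | lia].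
Qed.

(* If [e_j] is not in [W], a vector of [W] is determined by its other [d] coordinates. *)
Lemma psi_generated (W : set 'rV[K]_d.+1) : K_subspace W -> (exists x, ~ W x) ->
  generated_by_d v (psi v W).
Proof.
move=> W_sub [x0 Wx0]; have [W0 WD WZ] := W_sub.
have [j Wej] : exists j, ~ W (delta_mx 0 j).
  apply: contrapT => all_in; apply: Wx0; rewrite (row_sum_delta x0).
  apply: (big_ind W) => // i _; apply: WZ; apply: contrapT => Wei.
  by apply: all_in; exists i.
have det x : psi v W x -> (forall i, x 0 (lift j i) = 0) -> x = 0.
  move=> [Wx _] xJ0; have Ex : x = x 0 j *: delta_mx 0 j.
    apply/rowP => k; rewrite !mxE eqxx /=.
    case: (unliftP j k) => [i ->|->]; last by rewrite eqxx mulr1.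
    by rewrite xJ0 eq_sym (negbTE (neq_lift j i)) mulr0.
  have [xj0|xj_neq0] := eqVneq (x 0 j) 0; first by rewrite Ex xj0 scale0r.
  by exfalso; apply: Wej; rewrite -[delta_mx _ _](scalerK xj_neq0) -Ex; apply: WZ.
have [g [Mg spans]] :=
  O_submodule_spanned vM (psi_O_submodule W_sub) (fun x => @proj2 _ _) det.
exists g; apply/funext => u; apply/propext; split; first exact: spans.
by move=> [a [Oa ->]]; apply: O_submodule_sum => //; apply: psi_O_submodule.
Qed.

Lemma psi_TO (W : set 'rV[K]_d.+1) : TK K d W -> TO v pi d (psi v W).
Proof.
move=> [W_sub [w [Ww w_neq0]] W_proper]; split.
- exact: psi_O_submodule.
- by move=> x [].
- exact: psi_not_sub_pi_Lattice Ww w_neq0.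
- exact: psi_generated.
Qed.

Lemma spanK_subspace (U : set 'rV[K]_d.+1) : O_submodule v U -> K_subspace (spanK U).
Proof.
move=> [U0 UD UZ]; split.
- by exists 1; rewrite oner_neq0 scaler0.
- move=> x y [a [a_neq0 Uax]] [b [b_neq0 Uby]].
  wlog le_ba : a b x y a_neq0 b_neq0 Uax Uby / v b <= v a.
    move=> wlog_ab; case: (leP (v b) (v a)) => [|/ltW] le; first exact: wlog_ab le.
    by rewrite addrC; apply: wlog_ab le.
  exists a; split=> //; rewrite scalerDr; apply: UD => //.
  by rewrite -[y](scalerK b_neq0) scalerA; apply: UZ => //; apply: in_O_div.
- move=> k x [a [a_neq0 Uax]]; have [->|k_neq0] := eqVneq k 0.
    by exists 1; rewrite oner_neq0 scale0r scaler0.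
  by exists (a / k); rewrite mulf_neq0 ?invr_neq0 // scalerA divfK.
Qed.

Lemma spanK_proper (U : set 'rV[K]_d.+1) : generated_by_d v U -> exists x, ~ spanK U x.
Proof.
move=> [g ->]; pose G : 'M[K]_(d, d.+1) := \matrix_(i, j) g i 0 j.
have [x x_notin] : exists x : 'rV[K]_d.+1, ~~ (x <= G)%MS.
  apply: contrapT => all_in.
  have : (1%:M <= G)%MS.
    by apply/row_subP => i; apply: contrapT => /negP ?; apply: all_in; exists (row i 1%:M).
  by move/mxrankS; rewrite mxrank1; have := rank_leq_row G; lia.
exists x => -[a [a_neq0 [c [_ Eax]]]]; apply: (negP x_notin).
rewrite -[x](scalerK a_neq0) Eax; apply/scalemx_sub/summx_sub => i _.
apply: scalemx_sub; have -> : g i = row i G by apply/rowP => j; rewrite !mxE.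
exact: row_sub.
Qed.

Lemma spanK_TK (U : set 'rV[K]_d.+1) : TO v pi d U -> TK K d (spanK U).
Proof.
move=> [U_sub _ U_not_pi U_gen]; split; [exact: spanK_subspace | | exact: spanK_proper].
have [u [Uu u_not_pi]] : exists u, U u /\ ~ exists w, Lattice v d w /\ u = pi *: w.
  apply: contrapT => all_pi; apply: U_not_pi => u Uu; apply: contrapT => u_not_pi.
  by apply: all_pi; exists u.
exists u; split; first by exists 1; rewrite oner_neq0 scale1r.
apply/eqP => u0; apply: u_not_pi; exists 0; rewrite u0 scaler0; split=> // i.
by rewrite mxE; apply: in_O0.
Qed.

Lemma exists_scale_Lattice (x : 'rV[K]_d.+1) : exists a, a != 0 /\ Lattice v d (a *: x).
Proof.
pose vx i := absz (v (x 0 i)); pose N := (\sum_(i < d.+1) vx i)%N.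
exists (pi ^+ N); split=> [|i]; first exact: expf_neq0.
rewrite mxE; have [->|xi_neq0] := eqVneq (x 0 i) 0; first by rewrite mulr0; left.
right; rewrite vM ?expf_neq0 // vX // v_pi.
have : (vx i <= N)%N by rewrite /N (bigD1 i) //= leq_addr.
rewrite -lez_nat /vx abszE => le_N.
have : - v (x 0 i) <= N by apply: le_trans (ler_norm _) _; rewrite normrN.
by rewrite natz; set vi := v _; lia.
Qed.

Lemma spanK_psi (W : set 'rV[K]_d.+1) : K_subspace W -> spanK (psi v W) = W.
Proof.
move=> [_ _ WZ]; apply/funext => x; apply/propext; split.
  by move=> [a [a_neq0 [Wax _]]]; rewrite -[x](scalerK a_neq0); apply: WZ.
move=> Wx; have [a [a_neq0 Lax]] := exists_scale_Lattice x.
by exists a; split=> //; split=> //; apply: WZ.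
Qed.

Lemma sub_psi_spanK (U : set 'rV[K]_d.+1) : U `<=` Lattice v d -> U `<=` psi v (spanK U).
Proof. by move=> UL u Uu; split; [exists 1; rewrite oner_neq0 scale1r | apply: UL]. Qed.

Lemma spanK_mono (U U' : set 'rV[K]_d.+1) : U `<=` U' -> spanK U `<=` spanK U'.
Proof. by move=> sub_UU' x [a [a_neq0 Uax]]; exists a; split=> //; apply: sub_UU'. Qed.

End Psi.

Arguments spanK {K d}.

Local Close Scope classical_set_scope.

Theorem mainTheorem12 (K : fieldType) (v : K -> int) (pi : K) (d : nat) :
  p_adic_field v -> pi != 0 -> v pi = 1 ->
  exists F : (set 'rV[K]_d.+1 -> R) -> (set 'rV[K]_d.+1 -> R),
    (forall (n : nat) (c : 'I_n.+1 -> set 'rV[K]_d.+1) (l : 'I_n.+1 -> R),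
        chain_in (TK K d) (@incl _) c -> simplex n l ->
        F (bary c l) = bary ((fun W => psi v W) \o c) l) /\
    homotopy_equivalence (TK K d) (@incl _) (TO v pi d) (@incl _) F.
Proof.
move=> [[vM vD _] _ _ _] pi_neq0 v_pi.
have incl_anti (A B : set 'rV[K]_d.+1) : incl A B -> incl B A -> A = B.
  by move=> ? ?; rewrite eqEsubset.
have incl_trans (A B C : set 'rV[K]_d.+1) : incl A B -> incl B C -> incl A C.
  exact: subset_trans.
have psi_chain n (c : 'I_n.+1 -> set 'rV[K]_d.+1) : chain_in (TK K d) (@incl _) c ->
    chain_in (TO v pi d) (@incl _) ((fun W => psi v W) \o c).
  move=> [cT c_mono]; split=> [i|i j /c_mono]; last exact: setSI.
  exact: psi_TO vM vD pi_neq0 v_pi _ (cT i).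
have spanK_chain n (c : 'I_n.+1 -> set 'rV[K]_d.+1) : chain_in (TO v pi d) (@incl _) c ->
    chain_in (TK K d) (@incl _) (spanK \o c).
  move=> [cT c_mono]; split=> [i|i j /c_mono]; last exact: spanK_mono.
  exact: spanK_TK vM pi_neq0 v_pi _ (cT i).
exists (bary_map (fun W => psi v W)); split=> [n c l _ _|]; first exact: bary_mapE.
split; first exact: bary_map_real_cont.
exists (bary_map spanK); split; first exact: bary_map_real_cont.
- apply: homotopic_id_on => t rt /=; rewrite (bary_map_comp _ _ rt).
  by apply: (bary_map_id_on _ rt) => W [W_sub _ _]; exact: spanK_psi vM pi_neq0 v_pi _ W_sub.
- apply: (@homotopic_eq_on _ _ _ _ _ _ (bary_map (fun U => psi v (spanK U)))).
    by move=> t rt; rewrite /= (bary_map_comp _ _ rt).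
  apply: inflationary_homotopic_id => // [U TU|U U' _ _ sub_UU'|U [_ UL _ _]].
  + exact/(psi_TO vM vD pi_neq0 v_pi)/(spanK_TK vM pi_neq0 v_pi).
  + exact: setSI (spanK_mono sub_UU').
  + exact: sub_psi_spanK.
Qed.
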